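(* Let $N=\{1,\ldots,n\}$ and $v\in\mathscr{G}_+(n)$. Then $v$ is a vertex of $\mathscr{BG}_+(n)$ if and only if $v$ is balanced and $0$-$1$-valued (i.e., $v(S)\in\{0,1\}$ for all $S\subseteq N$).
   Context: A game on $N$ is a map $v:2^N\to\mathbb{R}$ with $v(\varnothing)=0$. $\mathscr{G}_+(n)$ is the set of games with $v\geqslant 0$ and $v(N)=1$. The core of $v$ is $C(v)=\{x\in\mathbb{R}^N: \sum_{i\in S}x_i\geqslant v(S)\ \forall S\subseteq N,\ \sum_{i\in N}x_i=v(N)\}$; $v$ is balanced iff $C(v)\neq\varnothing$ (equivalently, $\sum_{S\in\mathscr{B}}\lambda^{\mathscr{B}}_Sv(S)\leqslant v(N)$ for every minimal balanced collection $\mathscr{B}\neq\{N\}$ with its balancing weights $\lambda^{\mathscr{B}}_S$). $\mathscr{BG}_+(n)$ is the set of balanced games in $\mathscr{G}_+(n)$, a polytope in $\mathbb{R}^{2^N\setminus\{\varnothing,N\}}$. *)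

(* Player set N = 'I_n (i.e. {0,...,n-1}, relabelling of {1,...,n}). *)
From mathcomp Require Import all_boot all_order all_algebra.
From mathcomp Require Import reals.
Set Implicit Arguments. Unset Strict Implicit. Unset Printing Implicit Defensive.
Import Order.TTheory GRing.Theory Num.Theory.
Local Open Scope ring_scope.

(* A game on N: a map v : 2^N -> R (with v(set0) = 0 imposed where needed). *)
Definition game (n : nat) (R : realType) := {set 'I_n} -> R.

Definition in_Gplus (n : nat) (R : realType) (v : game n R) : Prop :=
  v set0 = 0 /\ (forall S : {set 'I_n}, 0 <= v S) /\ v [set: 'I_n] = 1.

Definition core (n : nat) (R : realType) (v : game n R) : ('I_n -> R) -> Prop :=
  fun x => (forall S : {set 'I_n}, v S <= \sum_(i in S) x i) /\
           \sum_(i < n) x i = v [set: 'I_n].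

Definition balanced (n : nat) (R : realType) (v : game n R) : Prop :=
  exists x : 'I_n -> R, core v x.

Definition in_BGplus (n : nat) (R : realType) (v : game n R) : Prop :=
  in_Gplus v /\ balanced v.

Definition is_vertex_BGplus (n : nat) (R : realType) (v : game n R) : Prop :=
  in_BGplus v /\
  forall (w1 w2 : game n R) (t : R),
    in_BGplus w1 -> in_BGplus w2 -> 0 < t -> t < 1 ->
    (forall S, v S = t * w1 S + (1 - t) * w2 S) ->
    forall S, w1 S = w2 S.

Definition zero_one_valued (n : nat) (R : realType) (v : game n R) : Prop :=
  forall S : {set 'I_n}, v S = 0 \/ v S = 1.

(** A 0-1 valued point of a polytope contained in [[0,1]^(2^N)] is an extreme
    point of it.  Conversely, let [0 < v S < 1] and let [x] be in the
    core.  If [v S < x(S)], the value [v S] can be moved down to [0] and up to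
    [x(S)] while keeping [x] in the core.  If [v S = x(S)], pick [i \in S] and
    [j \notin S] carrying positive weight and move the weight of [j] onto [i]
    or that of [i] onto [j]; rescaling [v T] by [y(T) / x(T)] for these two
    imputations [y] gives two balanced games averaging to [v] but differing
    at [S]. *)
From mathcomp Require Import all_boot all_order all_algebra.
From mathcomp Require Import reals.
From mathcomp Require Import lra ring.
Set Implicit Arguments. Unset Strict Implicit. Unset Printing Implicit Defensive.
Import Order.TTheory GRing.Theory Num.Theory.
Local Open Scope ring_scope.

Lemma extreme_point_01 (R : realFieldType) (a b c t : R) :
  0 < t < 1 -> 0 <= b <= 1 -> 0 <= c <= 1 -> a = t * b + (1 - t) * c ->
  a = 0 \/ a = 1 -> b = c.
Proof.
move=> /andP[t0 t1] /andP[b0 b1] /andP[c0 c1] -> [] eq_a.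
- have tb0 : t * b = 0 by nra.
  have tc0 : (1 - t) * c = 0 by nra.
  move: tb0 tc0 => /eqP; rewrite mulf_eq0 => /orP[/eqP|/eqP ->]; first lra.
  move=> /eqP; rewrite mulf_eq0 => /orP[/eqP|/eqP ->]; lra.
- have tb1 : t * (1 - b) = 0 by nra.
  have tc1 : (1 - t) * (1 - c) = 0 by nra.
  move: tb1 tc1 => /eqP; rewrite mulf_eq0 => /orP[/eqP|/eqP ?]; first lra.
  move=> /eqP; rewrite mulf_eq0 => /orP[/eqP|/eqP ?]; lra.
Qed.

Lemma sumr_gt0_exists (R : realDomainType) (I : finType) (A : {pred I})
    (F : I -> R) :
  0 < \sum_(i in A) F i -> exists2 i, i \in A & 0 < F i.
Proof.
move=> sum_gt0; apply/exists_inP; apply: contraTT sum_gt0.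
rewrite negb_exists_in => /forall_inP F_le0; rewrite -leNgt.
by apply: sumr_le0 => i iA; rewrite leNgt F_le0.
Qed.

Section BalancedGames.
Variables (R : realType) (n : nat).
Implicit Types (v w : game n R) (x y z : 'I_n -> R) (S T : {set 'I_n}).

Lemma sum_ordT x : \sum_(i < n) x i = \sum_(i in [set: 'I_n]) x i.
Proof. by apply: eq_bigl => i; rewrite in_setT. Qed.

Lemma core_ge0 w x : (forall S, 0 <= w S) -> core w x -> forall k, 0 <= x k.
Proof.
move=> w_ge0 [core_le _] k; apply: le_trans (w_ge0 [set k]) _.
by have := core_le [set k]; rewrite big_set1.
Qed.

Lemma core_sum_le w x T : (forall S, 0 <= w S) -> core w x ->
  \sum_(k in T) x k <= w [set: 'I_n].
Proof.
move=> w_ge0 cx; have x_ge0 := core_ge0 w_ge0 cx; case: cx => _ <-.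
rewrite [leRHS](bigID (mem T)) /= lerDl.
by apply: sumr_ge0 => k _; apply: x_ge0.
Qed.

Lemma core_sum_divK w x T : (forall S, 0 <= w S) -> core w x ->
  w T / (\sum_(k in T) x k) * (\sum_(k in T) x k) = w T.
Proof.
move=> w_ge0 [core_le _]; have [sum0|sum_neq0] := eqVneq (\sum_(k in T) x k) 0.
  have : w T <= 0 by rewrite -sum0 core_le.
  by rewrite sum0 mulr0 => wT_le0; apply/esym/le_anti; rewrite wT_le0 w_ge0.
by rewrite divfK.
Qed.

Lemma BGplus_le1 w : in_BGplus w -> forall T, w T <= 1.
Proof.
move=> [[_ [w_ge0 wT]] [x cx]] T; rewrite -wT.
by apply: le_trans (core_sum_le T w_ge0 cx); case: cx.
Qed.

Lemma zero_one_vertex v :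
  in_BGplus v -> zero_one_valued v -> is_vertex_BGplus v.
Proof.
move=> BGv v01; split=> // w1 w2 t BGw1 BGw2 t0 t1 v_conv S.
have [[_ [w1_ge0 _]] _] := BGw1; have [[_ [w2_ge0 _]] _] := BGw2.
apply: (extreme_point_01 _ _ _ (v_conv S) (v01 S)).
- by rewrite t0 t1.
- by rewrite w1_ge0 BGplus_le1.
- by rewrite w2_ge0 BGplus_le1.
Qed.

Definition game_update v S (a : R) : game n R :=
  fun T => if T == S then a else v T.

Lemma game_update_BGplus v x S a :
  in_Gplus v -> core v x -> S != set0 -> S != [set: 'I_n] ->
  0 <= a <= \sum_(k in S) x k -> in_BGplus (game_update v S a).
Proof.
move=> [v0 [v_ge0 vT]] [core_le sumx] S_neq0 S_neqT /andP[a_ge0 a_le].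
rewrite /game_update; split; [split; [|split] | exists x; split].
- by rewrite eq_sym (negbTE S_neq0).
- by move=> T; case: eqP.
- by rewrite eq_sym (negbTE S_neqT).
- by move=> T; case: eqP => [->|].
- by rewrite eq_sym (negbTE S_neqT).
Qed.

Lemma vertex_core_tight v x S :
  in_Gplus v -> is_vertex_BGplus v -> core v x -> 0 < v S ->
  \sum_(k in S) x k = v S.
Proof.
move=> Gv [_ v_vertex] cx vS_gt0; have [v0 _] := Gv.
have [->|S_neqT] := eqVneq S [set: 'I_n]; first by case: cx => _; rewrite sum_ordT.
have S_neq0 : S != set0 by apply: contraTneq vS_gt0 => ->; rewrite v0 ltxx.
set s := \sum_(k in S) x k.
have vS_le : v S <= s by case: cx.
have s_gt0 : 0 < s := lt_le_trans vS_gt0 vS_le.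
apply/eqP; rewrite eq_sym eq_le vS_le /= leNgt; apply/negP => vS_lt.
have BG0 : in_BGplus (game_update v S 0).
  by apply: (game_update_BGplus Gv cx) => //; rewrite lexx ltW.
have BGs : in_BGplus (game_update v S s).
  by apply: (game_update_BGplus Gv cx) => //; rewrite lexx ltW.
have v_conv T : v T = (1 - v S / s) * game_update v S 0 T +
                      (1 - (1 - v S / s)) * game_update v S s T.
  rewrite /game_update; case: eqP => [->|_]; last by ring.
  by rewrite mulr0 add0r subKr divfK ?gt_eqF.
have t_gt0 : 0 < 1 - v S / s by rewrite subr_gt0 ltr_pdivrMr // mul1r.
have t_lt1 : 1 - v S / s < 1 by rewrite gtrDl oppr_lt0 divr_gt0.
have := v_vertex _ _ _ BG0 BGs t_gt0 t_lt1 v_conv S.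
by rewrite /game_update eqxx => /esym/eqP; rewrite gt_eqF.
Qed.

Definition transfer x (i j : 'I_n) (c : R) : 'I_n -> R :=
  fun k => x k + c * ((k == i)%:R - (k == j)%:R).

Lemma sum_transfer x i j c T :
  \sum_(k in T) transfer x i j c k =
  \sum_(k in T) x k + c * ((i \in T)%:R - (j \in T)%:R).
Proof.
have sum_delta l : \sum_(k in T) ((k == l)%:R : R) = (l \in T)%:R.
  have [lT|lT] := boolP (l \in T); last first.
    by rewrite big1 // => k kT; case: eqVneq kT lT => // -> ->.
  by rewrite (bigD1 l) //= eqxx big1 ?addr0 // => k /andP[_ /negbTE ->].
by rewrite big_split /= -mulr_sumr sumrB !sum_delta.
Qed.

Lemma transfer_ge0 x i j c : (forall k, 0 <= x k) -> i != j ->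
  - x i <= c <= x j -> forall k, 0 <= transfer x i j c k.
Proof.
move=> x_ge0 ij /andP[c_ge c_le] k; rewrite /transfer.
have [->|ki] := eqVneq k i; first by rewrite (negbTE ij) subr0 mulr1; lra.
have [->|kj] := eqVneq k j; last by rewrite subrr mulr0 addr0.
by rewrite sub0r mulrN1; lra.
Qed.

Lemma sum_transfer_setT x i j c :
  \sum_(k < n) transfer x i j c k = \sum_(k < n) x k.
Proof. by rewrite !sum_ordT sum_transfer !in_setT subrr mulr0 addr0. Qed.

Definition rescaled_game v x y : game n R :=
  fun T => v T / (\sum_(k in T) x k) * (\sum_(k in T) y k).

Lemma rescaled_game_BGplus v x y :
  in_Gplus v -> core v x -> (forall k, 0 <= y k) -> \sum_(k < n) y k = 1 ->
  in_BGplus (rescaled_game v x y).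
Proof.
move=> [v0 [v_ge0 vT]] cx y_ge0 sumy.
have x_ge0 := core_ge0 v_ge0 cx.
have sumxT : \sum_(k in [set: 'I_n]) x k = 1 by rewrite -sum_ordT -vT; case: cx.
have ratio_le1 T : v T / (\sum_(k in T) x k) <= 1.
  have [->|sum_neq0] := eqVneq (\sum_(k in T) x k) 0; first by rewrite invr0 mulr0.
  have sum_gt0 : 0 < \sum_(k in T) x k.
    by rewrite lt_neqAle eq_sym sum_neq0 sumr_ge0.
  by rewrite ler_pdivrMr // mul1r; case: cx.
rewrite /rescaled_game; split; [split; [|split] | exists y; split].
- by rewrite v0 !mul0r.
- by move=> S; rewrite mulr_ge0 ?divr_ge0 ?sumr_ge0.
- by rewrite sumxT -sum_ordT sumy vT divr1 mulr1.
- by move=> T; rewrite ler_piMl ?sumr_ge0.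
- by rewrite sumy sumxT -sum_ordT sumy vT divr1 mulr1.
Qed.

Lemma rescaled_game_conv v x y z (t : R) :
  (forall S, 0 <= v S) -> core v x ->
  (forall T, \sum_(k in T) x k = t * \sum_(k in T) y k + (1 - t) * \sum_(k in T) z k) ->
  forall T, v T = t * rescaled_game v x y T + (1 - t) * rescaled_game v x z T.
Proof.
move=> v_ge0 cx x_conv T; rewrite /rescaled_game -{1}(core_sum_divK T v_ge0 cx).
by rewrite x_conv; ring.
Qed.

Lemma vertex_tight_eq1 v x S :
  in_Gplus v -> is_vertex_BGplus v -> core v x -> 0 < v S ->
  \sum_(k in S) x k = v S -> v S = 1.
Proof.
move=> Gv [BGv v_vertex] cx vS_gt0 sumxS; have [_ [v_ge0 vT]] := Gv.
have x_ge0 := core_ge0 v_ge0 cx.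
apply/eqP; rewrite eq_le (BGplus_le1 BGv) /= leNgt; apply/negP => vS_lt1.
have [i iS xi_gt0] : exists2 i, i \in S & 0 < x i.
  by apply: sumr_gt0_exists; rewrite sumxS.
have [j jS xj_gt0] : exists2 j, j \in ~: S & 0 < x j.
  apply: sumr_gt0_exists; move: cx => [_].
  rewrite vT (bigID (mem S)) /= sumxS.
  under [X in _ + X = _]eq_bigl do rewrite -in_setC.
  lra.
rewrite in_setC in jS.
have ij : i != j by apply: contraNneq jS => <-.
pose y := transfer x i j (x j); pose z := transfer x i j (- x i).
pose t := x i / (x i + x j).
have sum_ij : 0 < x i + x j by rewrite addr_gt0.
have y_ge0 : forall k, 0 <= y k.
  by apply: transfer_ge0 => //; apply/andP; split; lra.
have z_ge0 : forall k, 0 <= z k.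
  by apply: transfer_ge0 => //; apply/andP; split; lra.
have sumy1 : \sum_(k < n) y k = 1 by rewrite sum_transfer_setT -vT; case: cx.
have sumz1 : \sum_(k < n) z k = 1 by rewrite sum_transfer_setT -vT; case: cx.
have BGy := rescaled_game_BGplus Gv cx y_ge0 sumy1.
have BGz := rescaled_game_BGplus Gv cx z_ge0 sumz1.
have x_conv T : \sum_(k in T) x k =
    t * \sum_(k in T) y k + (1 - t) * \sum_(k in T) z k.
  rewrite !sum_transfer /t; field; exact: lt0r_neq0.
have t_gt0 : 0 < t by rewrite divr_gt0.
have t_lt1 : t < 1 by rewrite ltr_pdivrMr // mul1r ltrDl.
have := v_vertex _ _ _ BGy BGz t_gt0 t_lt1 (rescaled_game_conv v_ge0 cx x_conv) S.
rewrite /rescaled_game !sum_transfer iS (negbTE jS) sumxS divff ?gt_eqF //.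
rewrite /= mulr1n mulr0n subr0 !mul1r !mulr1; lra.
Qed.

Lemma vertex_zero_one v :
  in_Gplus v -> is_vertex_BGplus v -> zero_one_valued v.
Proof.
move=> Gv vertex_v S; have [[_ [v_ge0 _]] [x cx]] := vertex_v.1.
have [vS_le0|vS_gt0] := leP (v S) 0; first by left; apply/le_anti; rewrite vS_le0 v_ge0.
right; apply: (vertex_tight_eq1 Gv vertex_v cx vS_gt0).
exact: vertex_core_tight Gv vertex_v cx vS_gt0.
Qed.

End BalancedGames.

Theorem theorem8 (R : realType) (n : nat) (v : game n R) :
  in_Gplus v ->
  (is_vertex_BGplus v <-> (balanced v /\ zero_one_valued v)).
Proof.
move=> Gv; split=> [vertex_v | [bal v01]].
- by split; [exact: vertex_v.1.2 | exact: vertex_zero_one].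
- exact: zero_one_vertex (conj Gv bal) v01.
Qed.
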